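(* For an integer $k\ge0$ and real $\alpha>k$, $$\sum_{n=1}^\infty\frac{H_{n+\alpha}}{(n+k)(n+\alpha)}=\frac{H_{\alpha-k}^2+H_{\alpha-k}^{(2)}}{\alpha-k}-\sum_{j=1}^k\frac{H_{\alpha+j-k}}{j(\alpha+j-k)}.$$
   Context: Shifted harmonic numbers: for a real $\alpha$ that is not a negative integer, $H_\alpha := \sum_{k=1}^\infty\left(\frac1k-\frac1{k+\alpha}\right)$ and, for integers $m\ge 2$, $H_\alpha^{(m)} := \sum_{k=1}^\infty\left(\frac1{k^m}-\frac1{(k+\alpha)^m}\right)=\zeta(m)-\zeta(m,\alpha+1)$, where $\zeta$ is the Riemann zeta function and $\zeta(s,\alpha+1)=\sum_{n=1}^\infty (n+\alpha)^{-s}$ is the Hurwitz zeta function. Powers such as $H_\alpha^2$ mean $(H_\alpha)^2$. Empty sums are $0$. *)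

From Stdlib Require Import Reals ClassicalEpsilon.
Open Scope R_scope.

(* Shifted harmonic number H_a = sum_{k>=1} (1/k - 1/(k+a)).
   Defined as the (chosen) limit of the convergent series; the series
   index i starts at 0 and stands for k = i+1. *)
Definition Hsh (a : R) : R :=
  epsilon (inhabits 0%R)
    (fun l => infinite_sum (fun i => / INR (i + 1) - / (INR (i + 1) + a)) l).

Definition Hshm (m : nat) (a : R) : R :=
  epsilon (inhabits 0%R)
    (fun l => infinite_sum (fun i => / (INR (i + 1)) ^ m - / (INR (i + 1) + a) ^ m) l).

Fixpoint sum1 (f : nat -> R) (k : nat) : R :=
  match k with
  | O => 0
  | S k' => sum1 f k' + f (S k')
  end.

(* With x = a - k > 0, shifting the summation index by k reduces the claim to
   T(x) = sum_{n>=1} H_{n+x}/(n(n+x)) = (H_x^2 + H_x^(2))/x, the subtracted finite sum being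
   the first k terms of T(x).  For T(x), sum the nonnegative double series
   1/(p(p+q)(p+q+x)) over p, q >= 1 in both orders.  By partial fractions, summing over q
   gives (H_{p+x} - H_p)/(px), summing over p gives (H_p/p - H_{p+x}/(p+x))/x, and the two
   add up to the p-th term of T(x).  The second series telescopes:
   2(H_p/p - H_{p+x}/(p+x)) = u_{p-1} - u_p + 1/p^2 - 1/(p+x)^2 with u_n = H_{n+x}^2 - H_n^2,
   and u_n = O(1/sqrt n) because H_{n+x} - H_n <= 2x/n and H_n <= 2 sqrt n.  Hence both
   orders of summation give (H_x^2 + H_x^(2))/(2x). *)

From Stdlib Require Import Reals Lra Lia Psatz ClassicalEpsilon.
From Coquelicot Require Import Coquelicot.
Open Scope R_scope.

Lemma sum_n_telescope (f : nat -> R) n :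
  sum_n (fun i => f i - f (S i)) n = f 0%nat - f (S n).
Proof.
  induction n as [|n IH].
  - now rewrite sum_O.
  - rewrite sum_Sn, IH. unfold plus; simpl. ring.
Qed.

Lemma is_series_telescope (f : nat -> R) (l : R) :
  is_lim_seq f l -> is_series (fun i => f i - f (S i)) (f 0%nat - l).
Proof.
  intros Hf. change (is_lim_seq (sum_n (fun i => f i - f (S i))) (f 0%nat - l)).
  apply (is_lim_seq_ext (fun n => f 0%nat - f (S n))).
  - intros n. symmetry. apply sum_n_telescope.
  - apply is_lim_seq_minus'; [apply is_lim_seq_const|].
    now apply is_lim_seq_incr_1 in Hf.
Qed.

Lemma is_lim_seq_inv_INR_shift (c : R) : 0 < c -> is_lim_seq (fun n => / (INR n + c)) 0.
Proof.
  intros hc. apply (is_lim_seq_inv _ p_infty); [|discriminate].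
  eapply is_lim_seq_plus; [apply is_lim_seq_INR|apply is_lim_seq_const|reflexivity].
Qed.

Lemma sum_n_le (a b : nat -> R) N : (forall n, a n <= b n) -> sum_n a N <= sum_n b N.
Proof. intros Hab. rewrite !sum_n_Reals. now apply sum_growing. Qed.

Lemma is_series_le (a b : nat -> R) la lb :
  (forall n, a n <= b n) -> is_series a la -> is_series b lb -> la <= lb.
Proof.
  intros Hab Ha Hb.
  exact (is_lim_seq_le (sum_n a) (sum_n b) la lb (fun N => sum_n_le a b N Hab) Ha Hb).
Qed.

Lemma is_series_ge0 (a : nat -> R) l : (forall n, 0 <= a n) -> is_series a l -> 0 <= l.
Proof.
  intros Ha Hl. apply (is_series_le (fun _ => 0) a); [exact Ha| |exact Hl].
  change (is_lim_seq (sum_n (fun _ => 0)) 0).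
  apply (is_lim_seq_ext (fun _ => 0)); [|apply is_lim_seq_const].
  intros n. rewrite sum_n_const. simpl. ring.
Qed.

Lemma sum_n_le_is_series (a : nat -> R) l :
  (forall n, 0 <= a n) -> is_series a l -> forall N, sum_n a N <= l.
Proof.
  intros Ha Hl N. rewrite sum_n_Reals. apply sum_incr; [|exact Ha].
  apply is_lim_seq_Reals. apply (is_lim_seq_ext (sum_n a)); [|exact Hl].
  intros n. apply sum_n_Reals.
Qed.

Lemma is_lim_seq_sum_n (u : nat -> nat -> R) (l : nat -> R) :
  (forall i, is_lim_seq (u i) (l i)) ->
  forall M, is_lim_seq (fun K => sum_n (fun i => u i K) M) (sum_n l M).
Proof.
  intros Hu M. induction M as [|M IH].
  - rewrite sum_O. apply (is_lim_seq_ext (u 0%nat)); [|apply Hu].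
    intros K. now rewrite sum_O.
  - rewrite sum_Sn. apply (is_lim_seq_ext (fun K => sum_n (fun i => u i K) M + u (S M) K)).
    + intros K. now rewrite sum_Sn.
    + exact (is_lim_seq_plus' _ _ _ _ IH (Hu (S M))).
Qed.

Section DoubleSeries.

Variables (a : nat -> nat -> R) (row col : nat -> R).
Hypothesis a_ge0 : forall i j, 0 <= a i j.
Hypothesis is_series_row : forall i, is_series (a i) (row i).
Hypothesis is_series_col : forall j, is_series (fun i => a i j) (col j).

Lemma sum_n_row_le (s : R) : is_series col s -> forall M, sum_n row M <= s.
Proof.
  intros Hs M.
  assert (col_ge0 : forall j, 0 <= col j).
  { intros j. exact (is_series_ge0 _ _ (fun i => a_ge0 i j) (is_series_col j)). }
  change (Rbar_le (sum_n row M) s).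
  apply (is_lim_seq_le (fun K => sum_n (fun i => sum_n (a i) K) M) (fun _ => s));
    [|exact (is_lim_seq_sum_n _ _ is_series_row M)|apply is_lim_seq_const].
  intros K. rewrite sum_n_switch. apply Rle_trans with (sum_n col K).
  - apply sum_n_le. intros j.
    exact (sum_n_le_is_series _ _ (fun i => a_ge0 i j) (is_series_col j) M).
  - exact (sum_n_le_is_series _ _ col_ge0 Hs K).
Qed.

End DoubleSeries.

Lemma is_series_swap (a : nat -> nat -> R) (row col : nat -> R) (s : R) :
  (forall i j, 0 <= a i j) -> (forall i, is_series (a i) (row i)) ->
  (forall j, is_series (fun i => a i j) (col j)) -> is_series col s ->
  is_series row s.
Proof.
  intros Ha Hrow Hcol Hs.
  pose proof (sum_n_row_le a row col Ha Hrow Hcol s Hs) as row_le.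
  destruct (ex_finite_lim_seq_incr (sum_n row) s) as [t Ht]; [|exact row_le|].
  { intros n. rewrite sum_Sn. unfold plus; simpl.
    pose proof (is_series_ge0 _ _ (Ha (S n)) (Hrow (S n))). lra. }
  assert (Hrow_t : is_series row t) by exact Ht.
  assert (t_le : t <= s).
  { exact (is_lim_seq_le _ (fun _ => s) t s row_le Ht (is_lim_seq_const s)). }
  assert (s_le : s <= t).
  { pose proof (sum_n_row_le (fun j i => a i j) col row (fun j i => Ha i j) Hcol Hrow t Hrow_t)
      as col_le.
    exact (is_lim_seq_le _ (fun _ => t) s t col_le Hs (is_lim_seq_const t)). }
  replace s with t by lra. exact Hrow_t.
Qed.

Lemma INR_add1 i : INR (i + 1) = INR i + 1.
Proof. rewrite plus_INR. reflexivity. Qed.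

Lemma inv_sub_inv_le (z y : R) : 1 <= z -> 0 <= y ->
  0 <= / z - / (z + y) <= 2 * y * (/ z - / (z + 1)).
Proof.
  intros hz hy.
  replace (/ z - / (z + y)) with (y / (z * (z + y))) by (field; lra).
  replace (2 * y * (/ z - / (z + 1))) with (2 * y / (z * (z + 1))) by (field; lra).
  split.
  - apply Rdiv_le_0_compat; nra.
  - apply Rmult_le_reg_r with (z * (z + y) * (z + 1)); [nra|].
    unfold Rdiv. field_simplify; [nra|lra|lra].
Qed.

Definition inv_sub (c y : R) (j : nat) := / (INR j + c) - / (INR j + c + y).

Lemma is_series_inv_telescope (c : R) : 0 < c ->
  is_series (fun j => / (INR j + c) - / (INR (S j) + c)) (/ c).
Proof.
  intros hc. replace (/ c) with (/ (INR 0 + c) - 0)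
    by (simpl; rewrite Rplus_0_l, Rminus_0_r; reflexivity).
  exact (is_series_telescope _ 0 (is_lim_seq_inv_INR_shift c hc)).
Qed.

Lemma inv_sub_le_telescope (c y : R) j : 1 <= c -> 0 <= y ->
  0 <= inv_sub c y j <= 2 * y * (/ (INR j + c) - / (INR (S j) + c)).
Proof.
  intros hc hy. unfold inv_sub. rewrite S_INR.
  replace (INR j + 1 + c) with (INR j + c + 1) by ring.
  apply inv_sub_inv_le; [pose proof (pos_INR j); lra|exact hy].
Qed.

Lemma ex_series_inv_sub (c y : R) : 1 <= c -> 0 <= y -> ex_series (inv_sub c y).
Proof.
  intros hc hy.
  apply (@ex_series_le R_AbsRing R_CompleteNormedModule _
           (fun j => 2 * y * (/ (INR j + c) - / (INR (S j) + c)))).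
  - intros j. destruct (inv_sub_le_telescope c y j hc hy).
    change (Rabs (inv_sub c y j) <= 2 * y * (/ (INR j + c) - / (INR (S j) + c))).
    rewrite Rabs_pos_eq; lra.
  - exists (2 * y * / c).
    exact (is_series_scal_l (2 * y) _ _ (is_series_inv_telescope c ltac:(lra))).
Qed.

Lemma is_series_inv_sub_bound (c y l : R) : 1 <= c -> 0 <= y ->
  is_series (inv_sub c y) l -> 0 <= l <= 2 * y / c.
Proof.
  intros hc hy Hl. split.
  - apply (is_series_ge0 _ _ (fun j => proj1 (inv_sub_le_telescope c y j hc hy)) Hl).
  - apply (is_series_le _ _ _ _ (fun j => proj2 (inv_sub_le_telescope c y j hc hy)) Hl).
    exact (is_series_scal_l (2 * y) _ _ (is_series_inv_telescope c ltac:(lra))).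
Qed.

Lemma is_series_epsilon (a : nat -> R) :
  ex_series a -> is_series a (epsilon (inhabits 0) (fun l => infinite_sum a l)).
Proof.
  intros [l Hl]. apply is_series_Reals, epsilon_spec.
  exists l. now apply is_series_Reals.
Qed.

Lemma is_series_Hsh (y : R) : 0 <= y -> is_series (inv_sub 1 y) (Hsh y).
Proof.
  intros hy.
  assert (Hterm : forall i, / INR (i + 1) - / (INR (i + 1) + y) = inv_sub 1 y i).
  { intros i. unfold inv_sub. now rewrite INR_add1. }
  apply (is_series_ext _ _ _ Hterm), is_series_epsilon.
  apply (ex_series_ext _ _ (fun i => eq_sym (Hterm i))), ex_series_inv_sub; lra.
Qed.

Lemma Hsh_ge0 (y : R) : 0 <= y -> 0 <= Hsh y.
Proof.
  intros hy. exact (proj1 (is_series_inv_sub_bound 1 y _ (Rle_refl 1) hy (is_series_Hsh y hy))).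
Qed.

Lemma Hsh_0 : Hsh 0 = 0.
Proof.
  apply Rle_antisym; [|apply Hsh_ge0, Rle_refl].
  pose proof (is_series_inv_sub_bound 1 0 _ (Rle_refl 1) (Rle_refl 0)
                (is_series_Hsh 0 (Rle_refl 0))).
  lra.
Qed.

Lemma is_series_Hsh_sub (p x : R) : 0 <= p -> 0 <= x ->
  is_series (inv_sub (1 + p) x) (Hsh (p + x) - Hsh p).
Proof.
  intros hp hx.
  pose proof (is_series_minus _ _ _ _ (is_series_Hsh (p + x) ltac:(lra)) (is_series_Hsh p hp))
    as H.
  refine (is_series_ext _ _ _ _ H). intros j.
  unfold inv_sub, plus, opp; simpl.
  replace (INR j + 1 + p) with (INR j + (1 + p)) by ring.
  replace (INR j + 1 + (p + x)) with (INR j + (1 + p) + x) by ring. ring.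
Qed.

Lemma Hsh_succ (y : R) : 0 <= y -> Hsh (y + 1) = Hsh y + / (y + 1).
Proof.
  intros hy.
  assert (Htel : is_series (inv_sub (1 + y) 1) (/ (1 + y))).
  { refine (is_series_ext _ _ _ _ (is_series_inv_telescope (1 + y) ltac:(lra))).
    intros j. unfold inv_sub. rewrite S_INR.
    now replace (INR j + 1 + (1 + y)) with (INR j + (1 + y) + 1) by ring. }
  pose proof (is_series_unique _ _ (is_series_Hsh_sub y 1 hy Rle_0_1)) as E1.
  pose proof (is_series_unique _ _ Htel) as E2.
  replace (/ (y + 1)) with (/ (1 + y)) by (now rewrite Rplus_comm). lra.
Qed.

Lemma Hsh_sub_le (z x : R) : 0 <= z -> 0 <= x ->
  0 <= Hsh (z + x) - Hsh z <= 2 * x / (1 + z).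
Proof.
  intros hz hx.
  exact (is_series_inv_sub_bound (1 + z) x _ ltac:(lra) hx (is_series_Hsh_sub z x hz hx)).
Qed.

Lemma inv_succ_le_sqrt_sub (t : R) : 0 <= t -> / (t + 1) <= 2 * (sqrt (t + 1) - sqrt t).
Proof.
  intros ht.
  pose proof (sqrt_pos t). pose proof (sqrt_sqrt t ht).
  pose proof (sqrt_sqrt (t + 1) ltac:(lra)).
  assert (s1 : 1 <= sqrt (t + 1))
    by (rewrite <- sqrt_1 at 1; apply sqrt_le_1_alt; lra).
  assert (st : sqrt t <= sqrt (t + 1)) by (apply sqrt_le_1_alt; lra).
  assert (rationalize : (sqrt (t + 1) - sqrt t) * (sqrt (t + 1) + sqrt t) = 1) by nra.
  apply (Rmult_le_reg_r (t + 1)); [lra|]. rewrite Rinv_l by lra.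
  assert (0 <= (sqrt (t + 1) - sqrt t) * (2 * (t + 1) - sqrt (t + 1) - sqrt t)) by
    (apply Rmult_le_pos; nra).
  nra.
Qed.

Lemma Hsh_INR_le_sqrt n : Hsh (INR n) <= 2 * sqrt (INR n).
Proof.
  induction n as [|n IH].
  - simpl. rewrite Hsh_0, sqrt_0. lra.
  - rewrite S_INR, (Hsh_succ _ (pos_INR n)).
    pose proof (inv_succ_le_sqrt_sub (INR n) (pos_INR n)). lra.
Qed.

Lemma is_series_Hshm2 (x : R) : 0 <= x ->
  is_series (fun j => / INR (j + 1) ^ 2 - / (INR (j + 1) + x) ^ 2) (Hshm 2 x).
Proof.
  intros hx.
  assert (Hbound : forall j, Rabs (/ INR (j + 1) ^ 2 - / (INR (j + 1) + x) ^ 2)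
                             <= 2 * (/ (INR j + 1) - / (INR (S j) + 1))).
  { intros j. rewrite INR_add1, S_INR. pose proof (pos_INR j).
    set (z := INR j + 1). replace (INR j + 1 + 1) with (z + 1) by (unfold z; ring).
    assert (hz : 1 <= z) by (unfold z; lra).
    assert (0 < / (z + x) ^ 2 <= / z ^ 2).
    { split; [apply Rinv_0_lt_compat, pow_lt; lra|].
      apply Rinv_le_contravar; [apply pow_lt; lra|apply pow_incr; lra]. }
    rewrite Rabs_pos_eq by lra.
    replace (2 * (/ z - / (z + 1))) with (/ z ^ 2 + (z - 1) / (z ^ 2 * (z + 1)))
      by (field; lra).
    assert (0 <= (z - 1) / (z ^ 2 * (z + 1))) by (apply Rdiv_le_0_compat; nra).
    lra. }
  assert (Hex : ex_series (fun j => / INR (j + 1) ^ 2 - / (INR (j + 1) + x) ^ 2)).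
  { apply (@ex_series_le R_AbsRing R_CompleteNormedModule _ _ Hbound).
    exists (2 * / 1). exact (is_series_scal_l 2 _ _ (is_series_inv_telescope 1 Rlt_0_1)). }
  exact (is_series_epsilon _ Hex).
Qed.

Lemma is_lim_seq_inv_sqrt_INR_succ : is_lim_seq (fun n => / sqrt (INR n + 1)) 0.
Proof.
  pose proof (is_lim_seq_continuous sqrt _ 0 (continuity_pt_sqrt 0 (Rle_refl 0))
                (is_lim_seq_inv_INR_shift 1 Rlt_0_1)) as H.
  rewrite sqrt_0 in H. refine (is_lim_seq_ext _ _ _ _ H).
  intros n. apply sqrt_inv.
Qed.

Lemma is_lim_seq_Hsh_sq_sub (x : R) : 0 <= x ->
  is_lim_seq (fun n => Hsh (INR n + x) ^ 2 - Hsh (INR n) ^ 2) 0.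
Proof.
  intros hx. apply is_lim_seq_incr_1.
  set (v := fun n => 8 * x * / sqrt (INR n + 1) + 4 * x ^ 2 * / (INR n + 1)).
  assert (Hv : is_lim_seq v 0).
  { pose proof (is_lim_seq_scal_l _ (8 * x) _ is_lim_seq_inv_sqrt_INR_succ) as H1.
    pose proof (is_lim_seq_scal_l _ (4 * x ^ 2) _ (is_lim_seq_inv_INR_shift 1 Rlt_0_1)) as H2.
    simpl in H1, H2. rewrite Rmult_0_r in H1, H2.
    pose proof (is_lim_seq_plus' _ _ _ _ H1 H2) as H. now rewrite Rplus_0_r in H. }
  apply (is_lim_seq_le_le (fun _ => 0) _ v); [|apply is_lim_seq_const|exact Hv].
  intros n. unfold v. rewrite S_INR. pose proof (pos_INR n).
  set (z := INR n + 1).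
  assert (hz : 1 <= z) by (unfold z; lra).
  assert (H_le : Hsh z <= 2 * sqrt z) by (unfold z; rewrite <- S_INR; apply Hsh_INR_le_sqrt).
  pose proof (Hsh_ge0 z ltac:(lra)) as H_ge0.
  pose proof (Hsh_sub_le z x ltac:(lra) hx) as [d_ge0 d_le].
  clearbody z. set (s := sqrt z) in *.
  assert (hs : 1 <= s) by (unfold s; rewrite <- sqrt_1; apply sqrt_le_1_alt; lra).
  assert (zs : z = s * s) by (unfold s; rewrite sqrt_sqrt; lra).
  clearbody s. set (d := Hsh (z + x) - Hsh z) in *.
  replace (Hsh (z + x)) with (Hsh z + d) by (unfold d; ring).
  assert (d_le' : d <= 2 * x / z).
  { apply Rle_trans with (2 * x / (1 + z)); [exact d_le|].
    apply Rmult_le_compat_l; [lra|]. apply Rinv_le_contravar; lra. }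
  assert (e_le : 2 * x / z <= 2 * x).
  { rewrite <- (Rdiv_1_r (2 * x)) at 2.
    apply Rmult_le_compat_l; [lra|]. rewrite <- Rinv_1. apply Rinv_le_contravar; lra. }
  assert (Hprod : d * (2 * Hsh z + d) <= 2 * x / z * (4 * s + 2 * x)).
  { apply Rmult_le_compat; lra. }
  replace (2 * x / z * (4 * s + 2 * x)) with (8 * x * / s + 4 * x ^ 2 * / z) in Hprod
    by (rewrite zs; field; lra).
  split; nra.
Qed.

Section DoubleSum.

Variable x : R.
Hypothesis x_gt0 : 0 < x.

Definition kernel (i j : nat) : R :=
  / (INR (i + 1) * (INR (i + 1) + INR (j + 1)) * (INR (i + 1) + INR (j + 1) + x)).

Definition row_total (i : nat) : R :=
  (Hsh (INR (i + 1) + x) - Hsh (INR (i + 1))) / (INR (i + 1) * x).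

Definition col_total (j : nat) : R :=
  (Hsh (INR (j + 1)) / INR (j + 1) - Hsh (INR (j + 1) + x) / (INR (j + 1) + x)) / x.

Lemma kernel_ge0 i j : 0 <= kernel i j.
Proof.
  unfold kernel. rewrite !INR_add1. pose proof (pos_INR i). pose proof (pos_INR j).
  left. apply Rinv_0_lt_compat. repeat apply Rmult_lt_0_compat; lra.
Qed.

Lemma is_series_kernel_row i : is_series (kernel i) (row_total i).
Proof.
  set (p := INR (i + 1)).
  assert (hp : 1 <= p) by (unfold p; rewrite INR_add1; pose proof (pos_INR i); lra).
  pose proof (is_series_scal_l (/ (p * x)) _ _ (is_series_Hsh_sub p x ltac:(lra) ltac:(lra)))
    as H.
  unfold row_total. fold p.
  replace ((Hsh (p + x) - Hsh p) / (p * x)) with (/ (p * x) * (Hsh (p + x) - Hsh p))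
    by (field; lra).
  refine (is_series_ext _ _ _ _ H). intros j.
  unfold kernel, inv_sub, scal; simpl. unfold mult; simpl. fold p. rewrite INR_add1.
  pose proof (pos_INR j). field. repeat split; lra.
Qed.

Lemma is_series_kernel_col j : is_series (fun i => kernel i j) (col_total j).
Proof.
  set (q := INR (j + 1)).
  assert (hq : 1 <= q) by (unfold q; rewrite INR_add1; pose proof (pos_INR j); lra).
  pose proof (is_series_minus _ _ _ _
    (is_series_scal_l (/ (q * x)) _ _ (is_series_Hsh q ltac:(lra)))
    (is_series_scal_l (/ (x * (q + x))) _ _ (is_series_Hsh (q + x) ltac:(lra)))) as H.
  unfold col_total. fold q.
  replace ((Hsh q / q - Hsh (q + x) / (q + x)) / x)
    with (plus (scal (/ (q * x)) (Hsh q)) (opp (scal (/ (x * (q + x))) (Hsh (q + x)))))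
    by (unfold plus, opp, scal; simpl; unfold mult; simpl; field; lra).
  refine (is_series_ext _ _ _ _ H). intros i.
  unfold kernel, inv_sub, plus, opp, scal; simpl. unfold mult; simpl. fold q.
  rewrite INR_add1. pose proof (pos_INR i). field. repeat split; lra.
Qed.

Lemma col_total_telescoping j :
  2 * x * col_total j =
  (Hsh (INR j + x) ^ 2 - Hsh (INR j) ^ 2) - (Hsh (INR (S j) + x) ^ 2 - Hsh (INR (S j)) ^ 2)
  + (/ INR (j + 1) ^ 2 - / (INR (j + 1) + x) ^ 2).
Proof.
  unfold col_total. rewrite INR_add1, S_INR. pose proof (pos_INR j).
  replace (INR j + 1 + x) with (INR j + x + 1) by ring.
  rewrite (Hsh_succ (INR j + x)), (Hsh_succ (INR j)) by lra.
  field. lra.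
Qed.

Lemma is_series_col_total : is_series col_total ((Hsh x ^ 2 + Hshm 2 x) / (2 * x)).
Proof.
  pose proof (is_series_plus _ _ _ _
    (is_series_telescope _ 0 (is_lim_seq_Hsh_sq_sub x ltac:(lra)))
    (is_series_Hshm2 x ltac:(lra))) as H.
  pose proof (is_series_scal_l (/ (2 * x)) _ _ H) as H'.
  replace ((Hsh x ^ 2 + Hshm 2 x) / (2 * x))
    with (scal (/ (2 * x)) (plus (Hsh (INR 0 + x) ^ 2 - Hsh (INR 0) ^ 2 - 0) (Hshm 2 x))).
  2:{ simpl. rewrite Rplus_0_l, Hsh_0. unfold scal, plus; simpl. unfold mult; simpl. field. lra. }
  refine (is_series_ext _ _ _ _ H'). intros j.
  change (/ (2 * x) * ((Hsh (INR j + x) ^ 2 - Hsh (INR j) ^ 2)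
    - (Hsh (INR (S j) + x) ^ 2 - Hsh (INR (S j)) ^ 2)
    + (/ INR (j + 1) ^ 2 - / (INR (j + 1) + x) ^ 2)) = col_total j).
  rewrite <- col_total_telescoping. field. lra.
Qed.

End DoubleSum.

Lemma is_series_Hsh_div (x : R) : 0 < x ->
  is_series (fun i => Hsh (INR (i + 1) + x) / (INR (i + 1) * (INR (i + 1) + x)))
    ((Hsh x ^ 2 + Hshm 2 x) / x).
Proof.
  intros hx.
  pose proof (is_series_col_total x hx) as Hcol.
  pose proof (is_series_swap (kernel x) (row_total x) (col_total x) _ (kernel_ge0 x hx)
                (is_series_kernel_row x hx) (is_series_kernel_col x hx) Hcol) as Hrow.
  replace ((Hsh x ^ 2 + Hshm 2 x) / x)
    with (plus ((Hsh x ^ 2 + Hshm 2 x) / (2 * x)) ((Hsh x ^ 2 + Hshm 2 x) / (2 * x)))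
    by (unfold plus; simpl; field; lra).
  refine (is_series_ext _ _ _ _ (is_series_plus _ _ _ _ Hrow Hcol)). intros i.
  unfold plus, row_total, col_total; simpl. rewrite INR_add1. pose proof (pos_INR i).
  field. lra.
Qed.

Lemma is_series_drop_sum1 (g : nat -> R) (L : R) k :
  is_series (fun i => g (i + 1)%nat) L ->
  is_series (fun i => g (i + 1 + k)%nat) (L - sum1 g k).
Proof.
  intros HL. induction k as [|k IH].
  - simpl. rewrite Rminus_0_r.
    refine (is_series_ext _ _ _ _ HL). intros i. now rewrite Nat.add_0_r.
  - simpl sum1.
    assert (IH' : is_series (fun i => g (i + 1 + k)%nat)
                    (plus (L - (sum1 g k + g (S k))) (g (0 + 1 + k)%nat))).
    { replace (0 + 1 + k)%nat with (S k) by lia. unfold plus; simpl.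
      now replace (L - (sum1 g k + g (S k)) + g (S k)) with (L - sum1 g k) by ring. }
    refine (is_series_ext _ _ _ _ (is_series_incr_1 _ _ IH')). intros i. f_equal. lia.
Qed.

Theorem mainTheorem6 (k : nat) (a : R) (ha : INR k < a) :
  infinite_sum
    (fun i => Hsh (INR (i + 1) + a) / ((INR (i + 1) + INR k) * (INR (i + 1) + a)))
    ((Hsh (a - INR k) ^ 2 + Hshm 2 (a - INR k)) / (a - INR k)
     - sum1 (fun j => Hsh (a + INR j - INR k) / (INR j * (a + INR j - INR k))) k).
Proof.
  set (g := fun j => Hsh (a + INR j - INR k) / (INR j * (a + INR j - INR k))).
  pose proof (is_series_Hsh_div (a - INR k) ltac:(lra)) as Hx.
  assert (Hg : is_series (fun i => g (i + 1)%nat)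
                 ((Hsh (a - INR k) ^ 2 + Hshm 2 (a - INR k)) / (a - INR k))).
  { refine (is_series_ext _ _ _ _ Hx). intros i. unfold g.
    now replace (a + INR (i + 1) - INR k) with (INR (i + 1) + (a - INR k)) by ring. }
  apply is_series_Reals. refine (is_series_ext _ _ _ _ (is_series_drop_sum1 g _ k Hg)).
  intros i. unfold g. rewrite plus_INR.
  now replace (a + (INR (i + 1) + INR k) - INR k) with (INR (i + 1) + a) by ring.
Qed.
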